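(* Let $\mathcal D_r$ be a Heegner divisor of even type. Then $\tilde k/2\notin M_r$, where $M_r$ is regarded as a subgroup of $A_{L_+}$ via the projection $M_r\subset A_{L_+}\oplus A_{\Lambda_r}\to A_{L_+}$.
   Context: Setting: $C=\{f=0\}$ a smooth plane quartic, $X_C=\{t^4=f\}\subset\mathbb P^3$, $\sigma(x:y:z:t)=(x:y:z:it)$, $\tau=\sigma^2$, $S_C=X_C/\langle\tau\rangle$ a degree 2 Del Pezzo surface with canonical class $k$, $\pi_2:X_C\to S_C$ the quotient, $\tilde k=\pi_2^*(k)$. $L_{K3}=H^2(X_C,\mathbb Z)\cong U^{\oplus3}\oplus E_8^{\oplus2}$, $L_\pm=\{x:\tau^*x=\pm x\}$, $L_+=\pi_2^*Pic(S_C)$, $A_{L}=L^*/L$ denotes discriminant groups. For a primitive $r\in L_-$ with $\Lambda_r=\langle r,\sigma^*r\rangle$ primitive in $L_-$: the Heegner divisor $\mathcal D_r$ is the image of $\{z\in B:(z,r)=0\}$ in the ball quotient $\mathcal M=B/\Gamma$ (where $B$ is the 6-ball of periods in the $i$-eigenspace of $\sigma^*$ on $L_-\otimes\mathbb C$ and $\Gamma$ the group of isometries of $L_-$ commuting with $\sigma^*$); its type is $n$ where $r^2=-2n$. $M_r=P/(L_+\oplus\Lambda_r)$, where $P$ is the orthogonal complement in $L_{K3}$ of the orthogonal complement of $\Lambda_r$ in $L_-$; $M_r$ embeds naturally in $A_{L_+}\oplus A_{\Lambda_r}$. *)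

(* Abstract lattice model of (H^2(X_C,Z), sigma^*, ktilde). *)
From HB Require Import structures.
From mathcomp Require Import all_boot all_order all_algebra.
Set Implicit Arguments.
Unset Strict Implicit.
Unset Printing Implicit Defensive.
Import Order.TTheory GRing.Theory Num.Theory.
Local Open Scope ring_scope.

Definition E8edge (a b : nat) : bool :=
  [|| (a == 0) && (b == 1), (a == 1) && (b == 2), (a == 2) && (b == 3),
      (a == 3) && (b == 4), (a == 4) && (b == 5), (a == 5) && (b == 6)
    | (a == 4) && (b == 7)]%N.

Definition E8neg (a b : nat) : int :=
  if a == b then -2 else if E8edge a b || E8edge b a then 1 else 0.

(* indices 0..5 : three hyperbolic planes U; 6..13 and 14..21 : two copies of E8(-1) *)
Definition K3entry (i j : nat) : int :=
  if (i < 6)%N && (j < 6)%N then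
    (if (i./2 == j./2) && (i != j) then 1 else 0)
  else if (6 <= i < 14)%N && (6 <= j < 14)%N then E8neg (i - 6) (j - 6)
  else if (14 <= i)%N && (14 <= j)%N then E8neg (i - 14) (j - 14)
  else 0.

Definition K3form : 'M[int]_22 := \matrix_(i, j) K3entry i j.

Definition bil (x y : 'cV[int]_22) : int := (x^T *m K3form *m y) 0 0.

Definition toQ (x : 'cV[int]_22) : 'cV[rat]_22 := map_mx (fun z : int => z%:~R) x.
Definition matQ (M : 'M[int]_22) : 'M[rat]_22 := map_mx (fun z : int => z%:~R) M.

(* basis l, e_1..e_7 :  l^2 = 1, e_i^2 = -1 *)
Definition I17 : 'M[int]_8 := \matrix_(i, j) (if i == j then (if i == 0 :> nat then 1 else -1) else 0).
Definition kcan : 'cV[int]_8 := \col_i (if i == 0 :> nat then -3 else 1).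
(* the Geiser involution x |-> -x + (x.k) k  (fixes k, -1 on k^perp) *)
Definition geiser : 'M[int]_8 := - 1%:M + kcan *m kcan^T *m I17.

Definition Lplus (sigma : 'M[int]_22) (x : 'cV[int]_22) : Prop := sigma ^+ 2 *m x = x.
Definition Lminus (sigma : 'M[int]_22) (x : 'cV[int]_22) : Prop := sigma ^+ 2 *m x = - x.

(* Standing setup: sigma = sigma^* is an isometry of L_K3 of order dividing 4,
   phi = pi_2^* : Pic(S_C) = I_{1,7} -> L_K3 multiplies the form by 2 and has
   image exactly L_+, and sigma acts on pi_2^* Pic(S_C) as the Geiser
   involution (sigma descends to the covering involution of S_C -> P^2). *)
Definition quartic_setup (sigma : 'M[int]_22) (phi : 'M[int]_(22, 8)) : Prop :=
  [/\ sigma^T *m K3form *m sigma = K3form,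
      sigma ^+ 4 = 1,
      phi^T *m K3form *m phi = 2%:R *: I17,
      (forall x, Lplus sigma x <-> exists y : 'cV[int]_8, x = phi *m y) &
      sigma *m phi = phi *m geiser].

Definition ktilde (phi : 'M[int]_(22, 8)) : 'cV[int]_22 := phi *m kcan.

Definition primitive_vec (S : 'cV[int]_22 -> Prop) (r : 'cV[int]_22) : Prop :=
  forall (m : int) (y : 'cV[int]_22), S y -> r = m *: y -> m = 1 \/ m = -1.

Definition Lam (sigma : 'M[int]_22) (r x : 'cV[int]_22) : Prop :=
  exists a b : int, x = a *: r + b *: (sigma *m r).

Definition primitive_in_Lminus (sigma : 'M[int]_22) (S : 'cV[int]_22 -> Prop) : Prop :=
  forall (m : int) (x : 'cV[int]_22), m != 0 -> Lminus sigma x -> S (m *: x) -> S x.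

Definition Lam_perp (sigma : 'M[int]_22) (r y : 'cV[int]_22) : Prop :=
  Lminus sigma y /\ bil y r = 0 /\ bil y (sigma *m r) = 0.

Definition Pset (sigma : 'M[int]_22) (r x : 'cV[int]_22) : Prop :=
  forall y, Lam_perp sigma r y -> bil x y = 0.

Definition LplusQ (sigma : 'M[int]_22) (a : 'cV[rat]_22) : Prop := matQ sigma ^+ 2 *m a = a.
Definition LamQ (sigma : 'M[int]_22) (r : 'cV[int]_22) (b : 'cV[rat]_22) : Prop :=
  exists al be : rat, b = al *: toQ r + be *: (matQ sigma *m toQ r).

(* the class of v in A_{L_+} = L_+^* / L_+ lies in the projection of
   M_r = P / (L_+ (+) Lambda_r) to A_{L_+}: some x in P decomposes as
   x = a + b with a in L_+^*, b in Lambda_r^*, and a = v mod L_+. *)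
Definition in_proj_Mr (sigma : 'M[int]_22) (r : 'cV[int]_22) (v : 'cV[rat]_22) : Prop :=
  exists x : 'cV[int]_22, Pset sigma r x /\
  exists a b : 'cV[rat]_22, [/\ LplusQ sigma a, LamQ sigma r b, toQ x = a + b &
     exists l : 'cV[int]_22, Lplus sigma l /\ a - v = toQ l].

From HB Require Import structures.
From mathcomp Require Import all_boot all_order all_algebra.
From mathcomp Require Import zify ring.
Set Implicit Arguments.
Unset Strict Implicit.
Unset Printing Implicit Defensive.

Import Order.TTheory GRing.Theory Num.Theory.
Local Open Scope ring_scope.

(* Write x = a + b with a in L_+ (x) Q, b in Lambda_r (x) Q and a = ktilde/2
   mod L_+.  The eigenspaces of tau = sigma^2 are orthogonal, so x^2 = a^2 + b^2.
   Since pi_2^* doubles the form and k^2 = 2, a^2 is odd.  The vector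
   (sigma - 1) b = (sigma - 1)(x - l) is integral and lies in L_- and in
   Lambda_r (x) Q, hence in Lambda_r by primitivity; as sigma is an isometry
   with sigma^2 r = -r, its square is both 2 b^2 and
   (a0^2 + b0^2) r^2 = -2n (a0^2 + b0^2).  So b^2 is even when n is, and x^2
   is odd, contradicting the evenness of L_K3. *)

Section BilinearForm.
Variables (R : comPzRingType) (m : nat) (M : 'M[R]_m).

Definition bform (x y : 'cV[R]_m) : R := (x^T *m M *m y) 0 0.

Lemma bformDl x y z : bform (x + y) z = bform x z + bform y z.
Proof. by rewrite /bform linearD /= !mulmxDl mxE. Qed.

Lemma bformDr x y z : bform x (y + z) = bform x y + bform x z.
Proof. by rewrite /bform mulmxDr mxE. Qed.

Lemma bformZl c x y : bform (c *: x) y = c * bform x y.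
Proof. by rewrite /bform linearZ /= -!scalemxAl mxE. Qed.

Lemma bformZr c x y : bform x (c *: y) = c * bform x y.
Proof. by rewrite /bform -scalemxAr mxE. Qed.

Lemma bformNl x y : bform (- x) y = - bform x y.
Proof. by rewrite -scaleN1r bformZl mulN1r. Qed.

Lemma bformNr x y : bform x (- y) = - bform x y.
Proof. by rewrite -scaleN1r bformZr mulN1r. Qed.

Lemma bform_tr x y : bform x y = (y^T *m M^T *m x) 0 0.
Proof.
by rewrite /bform -(trmxK (y^T *m _ *m x)) [(_^T) 0 0]mxE !trmx_mul !trmxK mulmxA.
Qed.

Lemma bform_sym : M^T = M -> forall x y, bform x y = bform y x.
Proof. by move=> symM x y; rewrite bform_tr symM. Qed.

End BilinearForm.

Lemma bform_mulmx (R : comPzRingType) m k (M : 'M[R]_m) (A : 'M[R]_(m, k)) x y :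
  bform M (A *m x) (A *m y) = bform (A^T *m M *m A) x y.
Proof. by rewrite /bform trmx_mul !mulmxA. Qed.

Section Isometry.
Variables (R : comPzRingType) (m : nat) (M S : 'M[R]_m).
Hypothesis S_isometry : S^T *m M *m S = M.

Lemma bform_isometry x y : bform M (S *m x) (S *m y) = bform M x y.
Proof. by rewrite bform_mulmx S_isometry. Qed.

Lemma bform_anti_swap v :
  S *m (S *m v) = - v -> bform M v (S *m v) = - bform M (S *m v) v.
Proof. by move=> Sv; rewrite -bform_isometry Sv bformNr. Qed.

Lemma bform_anti_span v a b : S *m (S *m v) = - v ->
  bform M (a *: v + b *: (S *m v)) (a *: v + b *: (S *m v))
    = (a ^+ 2 + b ^+ 2) * bform M v v.
Proof.
move=> Sv; rewrite !(bformDl, bformDr, bformZl, bformZr).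
rewrite bform_isometry (bform_anti_swap Sv); ring.
Qed.

Lemma bform_anti_sub v :
  S *m (S *m v) = - v -> bform M (S *m v - v) (S *m v - v) = 2 * bform M v v.
Proof.
move=> Sv; have := bform_anti_span (-1) 1 Sv.
by rewrite scaleN1r scale1r addrC => ->; congr (_ * _); ring.
Qed.

End Isometry.

Lemma bform_pm_orthogonal (R : numDomainType) m (M S : 'M[R]_m) a b :
    S^T *m M *m S = M -> S *m (S *m a) = a -> S *m (S *m b) = - b ->
  bform M a b = 0 /\ bform M b a = 0.
Proof.
move=> isoS Sa Sb.
have iso2 x y := etrans (bform_isometry isoS _ _) (bform_isometry isoS x y).
split; apply/eqP; rewrite -eqNr; apply/eqP.
- by rewrite -[in RHS]iso2 Sa Sb bformNr.
- by rewrite -[in RHS]iso2 Sa Sb bformNl.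
Qed.

Lemma bform_map (R S : comPzRingType) (f : {rmorphism R -> S}) m (M : 'M[R]_m) x y :
  bform (map_mx f M) (map_mx f x) (map_mx f y) = f (bform M x y).
Proof. by rewrite /bform map_trmx -!map_mxM mxE. Qed.

Lemma bform_even (m : nat) (M : 'M[int]_m) :
    M^T = M -> (forall i, (2 %| M i i)%Z) ->
  forall x, (2 %| bform M x x)%Z.
Proof.
move=> symM evenM x.
pose A : 'M[int]_m := \matrix_(i, j)
  if (i < j)%N then M i j else if i == j then (M i i %/ 2)%Z else 0.
have M_split : M = A + A^T.
  apply/matrixP => i j; rewrite !mxE.
  case: (ltngtP i j) => [ij|ji|/val_inj <-].
  - by rewrite ifN ?addr0 // -val_eqE /= gtn_eqF.
  - rewrite ifN ?add0r -?val_eqE /= ?gtn_eqF //.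
    by rewrite -(congr1 (fun N : 'M_m => N i j) symM) mxE.
  - by rewrite eqxx -{1}(divzK (evenM i)); ring.
apply/dvdzP; exists (bform A x x).
rewrite M_split /bform mulmxDr mulmxDl mxE -/(bform A^T x x) bform_tr trmxK.
by ring.
Qed.

Lemma mulmx_sqr (R : pzRingType) n p (A : 'M[R]_n.+1) (v : 'M[R]_(n.+1, p)) :
  A ^+ 2 *m v = A *m (A *m v).
Proof. by rewrite expr2 -mulmxE mulmxA. Qed.

Lemma E8neg_sym a b : E8neg a b = E8neg b a.
Proof. by rewrite /E8neg eq_sym orbC. Qed.

Lemma K3entry_sym i j : K3entry i j = K3entry j i.
Proof.
rewrite /K3entry [(i < 6)%N && _]andbC [(i./2 == _)]eq_sym [i == j]eq_sym.
rewrite [(6 <= i < 14)%N && _]andbC [(14 <= i)%N && _]andbC.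
by rewrite [E8neg (i - 6) _]E8neg_sym [E8neg (i - 14) _]E8neg_sym.
Qed.

Lemma K3form_sym : K3form^T = K3form.
Proof. by apply/matrixP => i j; rewrite !mxE K3entry_sym. Qed.

Lemma K3form_diag_even i : (2 %| K3form i i)%Z.
Proof. by rewrite mxE /K3entry /E8neg !eqxx andbF; do ?case: ifP. Qed.

Lemma bil_even x : (2 %| bil x x)%Z.
Proof. exact: bform_even K3form_sym K3form_diag_even x. Qed.

Lemma I17_sym : I17^T = I17.
Proof. by apply/matrixP => i j; rewrite !mxE eq_sym; case: eqP => // ->. Qed.

Lemma kcan_sqr : bform I17 kcan kcan = 2.
Proof.
have -> : I17 = diag_mx (\row_i (if i == 0 :> nat then 1 else -1)).
  apply/matrixP => i j; rewrite !mxE.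
  by case: eqP => [->|]; rewrite ?eqxx ?mulr1n ?mulr0n.
by rewrite /bform mul_mx_diag mxE !big_ord_recl big_ord0 !mxE.
Qed.

Lemma geiser_kcan : geiser *m kcan = kcan.
Proof.
rewrite /geiser mulmxDl mulNmx mul1mx -!mulmxA (mulmxA kcan^T).
have -> : kcan^T *m I17 *m kcan = 2%:M.
  by rewrite [LHS]mx11_scalar -/(bform I17 kcan kcan) kcan_sqr.
by rewrite mul_mx_scalar scaler_nat mulr2n addKr.
Qed.

Lemma bil_pullback (phi : 'M[int]_(22, 8)) :
    phi^T *m K3form *m phi = 2%:R *: I17 ->
  forall u w, bil (phi *m u) (phi *m w) = 2 * bform I17 u w.
Proof.
move=> Hphi u w; rewrite /bil -/(bform _ _ _) bform_mulmx Hphi.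
by rewrite /bform -scalemxAr -scalemxAl mxE.
Qed.

Lemma sigma_ktilde sigma phi :
  sigma *m phi = phi *m geiser -> sigma *m ktilde phi = ktilde phi.
Proof. by move=> Hgei; rewrite /ktilde mulmxA Hgei -mulmxA geiser_kcan. Qed.

Local Notation bilQ := (bform (matQ K3form)).

Lemma bilQ_toQ x y : bilQ (toQ x) (toQ y) = (bil x y)%:~R.
Proof. exact: bform_map. Qed.

Lemma toQ_inj : injective toQ.
Proof.
move=> x y /matrixP eq_xy; apply/matrixP => i j.
by have := eq_xy i j; rewrite !mxE => /intr_inj.
Qed.

Lemma toQB x y : toQ (x - y) = toQ x - toQ y.
Proof. exact: map_mxB. Qed.

Lemma toQ_mulmx (A : 'M[int]_22) v : toQ (A *m v) = matQ A *m toQ v.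
Proof. exact: map_mxM. Qed.

Lemma isometry_matQ sigma : sigma^T *m K3form *m sigma = K3form ->
  (matQ sigma)^T *m matQ K3form *m matQ sigma = matQ K3form.
Proof. by move=> iso; rewrite /matQ map_trmx -!map_mxM iso. Qed.

Lemma bilQ_half_ktilde_odd phi y : phi^T *m K3form *m phi = 2%:R *: I17 ->
  let a := (1 / 2) *: toQ (ktilde phi) + toQ (phi *m y) in
  exists t : int, bilQ a a = (2 * t + 1)%:~R.
Proof.
move=> Hphi /=; exists (bform I17 kcan y + bform I17 y y).
rewrite !(bformDl, bformDr, bformZl, bformZr) !bilQ_toQ /ktilde !(bil_pullback Hphi).
rewrite kcan_sqr (bform_sym I17_sym y kcan).
by field.
Qed.

Lemma matQ_Lminus sigma r :
  Lminus sigma r -> matQ sigma *m (matQ sigma *m toQ r) = - toQ r.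
Proof. by move=> Hr; rewrite -!toQ_mulmx -mulmx_sqr Hr /toQ map_mxN. Qed.

Lemma LamQ_anti sigma r b : Lminus sigma r -> LamQ sigma r b ->
  matQ sigma *m (matQ sigma *m b) = - b.
Proof.
move=> /matQ_Lminus Sr [al [be ->]].
by rewrite !mulmxDr -!scalemxAr Sr mulmxN !scalerN opprD.
Qed.

Lemma LamQ_sub_sigma sigma r b : Lminus sigma r -> LamQ sigma r b ->
  LamQ sigma r (matQ sigma *m b - b).
Proof.
move=> /matQ_Lminus Sr [al [be ->]]; exists (- (al + be)), (al - be).
rewrite mulmxDr -!scalemxAr Sr.
by apply/matrixP => i j; rewrite !mxE; ring.
Qed.

Lemma Lam_of_LamQ sigma r z : primitive_in_Lminus sigma (Lam sigma r) ->
  Lminus sigma z -> LamQ sigma r (toQ z) -> Lam sigma r z.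
Proof.
move=> prim zLm [al [be Hz]].
apply: (prim (denq al * denq be)) => //; first by rewrite mulf_neq0 ?denq_neq0.
exists (numq al * denq be), (numq be * denq al); apply: toQ_inj.
rewrite /toQ map_mxD !map_mxZ map_mxM -/(toQ z) -/(toQ r) -/(matQ sigma) Hz.
rewrite scalerDr !scalerA; congr (_ *: _ + _ *: _); rewrite !rmorphM /= numqE; ring.
Qed.

Lemma sigma_sub_integral sigma x l a b v :
    matQ sigma *m v = v -> toQ x = a + b -> a - v = toQ l ->
  matQ sigma *m b - b = toQ (sigma *m (x - l) - (x - l)).
Proof.
move=> Sv Hx Hal; have -> : b = toQ (x - l) - v.
  by rewrite toQB Hx -Hal; apply/matrixP => i j; rewrite !mxE; ring.
by rewrite mulmxBr Sv -toQ_mulmx opprB addrA subrK [RHS]toQB.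
Qed.

Lemma Lam_norm sigma r z : sigma^T *m K3form *m sigma = K3form ->
    Lminus sigma r -> Lam sigma r z ->
  exists a b : int, bil z z = (a ^+ 2 + b ^+ 2) * bil r r.
Proof.
move=> iso Hr [a [b ->]]; exists a, b.
by apply: bform_anti_span; rewrite // -mulmx_sqr.
Qed.

Lemma LamQ_norm sigma r b w : sigma^T *m K3form *m sigma = K3form ->
    Lminus sigma r -> primitive_in_Lminus sigma (Lam sigma r) ->
    LamQ sigma r b -> matQ sigma *m b - b = toQ (sigma *m w - w) ->
  exists a0 b0 : int, 2 * bilQ b b = ((a0 ^+ 2 + b0 ^+ 2) * bil r r)%:~R.
Proof.
move=> iso Hr prim Hb Hw; set z := sigma *m w - w in Hw.
have Sb := LamQ_anti Hr Hb.
have zLm : Lminus sigma z.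
  apply: toQ_inj; rewrite mulmx_sqr !toQ_mulmx /toQ map_mxN -/(toQ z) -Hw.
  by rewrite !mulmxBr Sb mulmxN opprK opprB addrC.
have zLam : Lam sigma r z.
  by apply: Lam_of_LamQ => //; rewrite -Hw; exact: LamQ_sub_sigma.
have [a0 [b0 zz]] := Lam_norm iso Hr zLam.
by exists a0, b0; rewrite -zz -bilQ_toQ -Hw (bform_anti_sub (isometry_matQ iso)).
Qed.

Theorem lemma3p4 (sigma : 'M[int]_22) (phi : 'M[int]_(22, 8))
    (r : 'cV[int]_22) (n : nat) :
  quartic_setup sigma phi ->
  Lminus sigma r ->
  primitive_vec (Lminus sigma) r ->
  primitive_in_Lminus sigma (Lam sigma r) ->
  bil r r = - (2 * n)%:Z ->
  (0 < n)%N ->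
  ~~ odd n ->
  ~ in_proj_Mr sigma r ((1 / 2 : rat) *: toQ (ktilde phi)).
Proof.
move=> [iso _ Hphi HLp Hgei] Hr _ prim Hrr _ n_even.
move=> [x [_ [a [b [Ha Hb Hx [l [Hl Hal]]]]]]].
have [y l_def] := (HLp l).1 Hl.
have a_def : a = (1 / 2) *: toQ (ktilde phi) + toQ (phi *m y).
  by rewrite -l_def -Hal addrC subrK.
have [t aa] := bilQ_half_ktilde_odd y Hphi; rewrite /= -a_def in aa.
have Sv : matQ sigma *m ((1 / 2) *: toQ (ktilde phi)) = (1 / 2) *: toQ (ktilde phi).
  by rewrite -scalemxAr -toQ_mulmx (sigma_ktilde Hgei).
have shift := sigma_sub_integral Sv Hx Hal.
have [a0 [b0 bb]] := LamQ_norm iso Hr prim Hb shift.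
have [ab ba] : bilQ a b = 0 /\ bilQ b a = 0.
  apply: bform_pm_orthogonal (isometry_matQ iso) _ (LamQ_anti Hr Hb).
  by rewrite -mulmx_sqr; exact: Ha.
have [e xx] := dvdzP (bil_even x).
have /intr_inj : (e * 2)%:~R = (2 * t + 1 - n%:Z * (a0 ^+ 2 + b0 ^+ 2))%:~R :> rat.
  rewrite -xx -bilQ_toQ Hx !(bformDl, bformDr) ab ba addr0 add0r aa.
  apply: (@mulfI _ 2) => //; rewrite mulrDr bb Hrr; ring.
have [k ->] : exists k, n = (2 * k)%N.
  by exists n./2; rewrite -[LHS]odd_double_half (negbTE n_even) add0n -mul2n.
lia.
Qed.
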